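(* Let $0<p_0<1$, $\epsilon>0$, $\omega\ge0$, $\gamma_0\ge\gamma\ge0$, and suppose $p_0\le\frac12-\frac{\gamma_0+\gamma}{2\sqrt{4\epsilon^2+(\gamma_0+\gamma)^2}}$. Let $\omega(t),\epsilon_x(t),\epsilon_y(t),\delta\gamma_t$ be real-valued functions of time with $|\omega(t)|\le\omega$, $\sqrt{\epsilon_x^2(t)+\epsilon_y^2(t)}\le\epsilon$, $|\delta\gamma_t|\le\gamma$, and set $H(t)=[1+\omega(t)]I_z+\epsilon_x(t)I_x+\epsilon_y(t)I_y$, $\gamma_t=\gamma_0+\delta\gamma_t$. Let the qubit density matrix $\rho_t$ evolve according to $$\dot\rho_t=-i[H(t),\rho_t]+\gamma_t\Big(\sigma_-\rho_t\sigma_+-\tfrac12\sigma_+\sigma_-\rho_t-\tfrac12\rho_t\sigma_+\sigma_-\Big)$$ with $\rho_0=|0\rangle\langle0|$. Let $$T_a'=\frac{2p_0}{4\epsilon\sqrt{p_0-p_0^2}+2(\gamma_0+\gamma)(1-p_0)}.$$ Then for every $t\in[0,T_a']$, $\langle0|\rho_t|0\rangle\ge1-p_0$; equivalently, a projective measurement of $\sigma_z$ at time $t$ has probability of failure $\langle1|\rho_t|1\rangle\le p_0$.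
   Context: $\sigma_x,\sigma_y,\sigma_z$ are the Pauli matrices $\begin{pmatrix}0&1\\1&0\end{pmatrix},\begin{pmatrix}0&-i\\i&0\end{pmatrix},\begin{pmatrix}1&0\\0&-1\end{pmatrix}$, $I_j=\frac12\sigma_j$, $\sigma_-=\frac12(\sigma_x-i\sigma_y)$, $\sigma_+=\frac12(\sigma_x+i\sigma_y)$, $[A,B]=AB-BA$. $|0\rangle=(1,0)^T$, $|1\rangle=(0,1)^T$. Units with $\hbar=1$. *)

From HB Require Import structures.
From mathcomp Require Import all_boot all_order all_algebra.
From mathcomp Require Import all_classical all_reals all_analysis.
From mathcomp Require Export complex.
Set Implicit Arguments. Unset Strict Implicit. Unset Printing Implicit Defensive.
Import Order.TTheory GRing.Theory Num.Theory.
Import numFieldNormedType.Exports.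
Local Open Scope ring_scope.
Local Open Scope complex_scope.

Section Qubit.
Variable R : realType.
Local Notation C := R[i].

Definition mk2 (a b c d : C) : 'M[C]_2 :=
  \matrix_(k < 2, l < 2)
    if (k == 0 :> nat) then (if (l == 0 :> nat) then a else b)
    else (if (l == 0 :> nat) then c else d).

Definition sigma_x : 'M[C]_2 := mk2 0 1 1 0.
Definition sigma_y : 'M[C]_2 := mk2 0 (- 'i) 'i 0.
Definition sigma_z : 'M[C]_2 := mk2 1 0 0 (-1).

Definition I_x : 'M[C]_2 := (2^-1) *: sigma_x.
Definition I_y : 'M[C]_2 := (2^-1) *: sigma_y.
Definition I_z : 'M[C]_2 := (2^-1) *: sigma_z.

Definition sigma_minus : 'M[C]_2 := (2^-1) *: (sigma_x - 'i *: sigma_y).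
Definition sigma_plus  : 'M[C]_2 := (2^-1) *: (sigma_x + 'i *: sigma_y).

Definition commutator (A B : 'M[C]_2) : 'M[C]_2 := A *m B - B *m A.

Definition ket0 : 'cV[C]_2 := \col_(k < 2) (if (k == 0 :> nat) then 1 else 0).
Definition bra0 : 'rV[C]_2 := (map_mx conjc ket0)^T.

Definition Ham (w ex ey : R -> R) (t : R) : 'M[C]_2 :=
  (1 + w t)%:C *: I_z + (ex t)%:C *: I_x + (ey t)%:C *: I_y.

Definition lindblad_rhs (w ex ey dg : R -> R) (g0 : R) (t : R)
    (rho : 'M[C]_2) : 'M[C]_2 :=
  - 'i *: commutator (Ham w ex ey t) rho
  + (g0 + dg t)%:C *:
      (sigma_minus *m rho *m sigma_plus
       - (2^-1) *: (sigma_plus *m sigma_minus *m rho)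
       - (2^-1) *: (rho *m sigma_plus *m sigma_minus)).

End Qubit.

(* Along the solution the trace is conserved and rho stays Hermitian: the
   squared norm of its anti-Hermitian part has derivative -gamma_t (...) <= 0 and
   vanishes at t = 0.  Likewise -det rho = |rho01|^2 - rho00 (1 - rho00) stays
   nonpositive, its derivative being -gamma_t (-det rho + rho00^2).  Hence the
   excited population q = 1 - rho00 has derivative
   eps_x Im rho01 + eps_y Re rho01 + gamma_t rho00 <= eps sqrt(q - q^2) + gamma_t.
   While q <= p0 <= 1/2 this is at most F = 2 eps sqrt(p0 - p0^2) + K (1 - p0),
   K = gamma_0 + gamma, since the hypothesis on p0 gives K p0 <= eps sqrt(p0 - p0^2).
   Real induction then yields q(t) <= F t <= p0 for t <= T_a' = p0 / F. *)

From HB Require Import structures.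
From mathcomp Require Import all_boot all_order all_algebra.
From mathcomp Require Import all_classical all_reals all_analysis.
From mathcomp Require Import complex.
From mathcomp Require Import ring lra.
Import Order.TTheory GRing.Theory Num.Theory.
Import numFieldNormedType.Exports.
Local Open Scope ring_scope.
Local Open Scope complex_scope.
Local Open Scope classical_set_scope.
Set Implicit Arguments. Unset Strict Implicit. Unset Printing Implicit Defensive.

Section two_by_two.
Variable R : realType.
Local Notation C := R[i].
Local Notation RE := (@complex.Re R).
Local Notation IM := (@complex.Im R).

Lemma mk2E (M : 'M[C]_2) : M = mk2 (M 0 0) (M 0 1) (M 1 0) (M 1 1).
Proof.
apply/matrixP => i j; rewrite !mxE.
by case: i => [[|[|]]] //= ?; case: j => [[|[|]]] //= ?; congr (M _ _); apply/val_inj.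
Qed.

Lemma mulmk2 (a b c d a' b' c' d' : C) :
  mk2 a b c d *m mk2 a' b' c' d' =
  mk2 (a * a' + b * c') (a * b' + b * d') (c * a' + d * c') (c * b' + d * d').
Proof.
apply/matrixP => i j; rewrite !mxE !big_ord_recl big_ord0 !mxE /=.
by case: i => [[|[|]]] //= ?; case: j => [[|[|]]] //= ?; rewrite addr0.
Qed.

Lemma addmk2 (a b c d a' b' c' d' : C) :
  mk2 a b c d + mk2 a' b' c' d' = mk2 (a + a') (b + b') (c + c') (d + d').
Proof.
apply/matrixP => i j; rewrite !mxE.
by case: i => [[|[|]]] //= ?; case: j => [[|[|]]] //= ?.
Qed.

Lemma oppmk2 (a b c d : C) : - mk2 a b c d = mk2 (- a) (- b) (- c) (- d).
Proof.
apply/matrixP => i j; rewrite !mxE.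
by case: i => [[|[|]]] //= ?; case: j => [[|[|]]] //= ?.
Qed.

Lemma scalemk2 (k a b c d : C) : k *: mk2 a b c d = mk2 (k * a) (k * b) (k * c) (k * d).
Proof.
apply/matrixP => i j; rewrite !mxE.
by case: i => [[|[|]]] //= ?; case: j => [[|[|]]] //= ?.
Qed.

Lemma ket0_bra0 : ket0 R *m bra0 R = mk2 1 0 0 0.
Proof.
apply/matrixP => i j; rewrite !mxE big_ord_recl big_ord0 !mxE /=.
case: i => [[|[|]]] //= ?; case: j => [[|[|]]] //= ?;
  rewrite ?addr0 ?mul1r ?mulr0 ?mul0r //= ?conjc1 ?conjc0 //.
all: by apply/eqP; rewrite eq_complex /= ?oppr0 ?eqxx.
Qed.

Lemma bra0_mx_ket0 (M : 'M[C]_2) : (bra0 R *m M *m ket0 R) 0 0 = M 0 0.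
Proof.
rewrite !mxE !big_ord_recl !big_ord0 !mxE /= !big_ord_recl !big_ord0 !mxE /=.
have -> : (1 -i* 0 : C) = 1 by apply/eqP; rewrite eq_complex /= ?oppr0 ?eqxx.
have -> : ((- 0)*i : C) = 0 by apply/eqP; rewrite eq_complex /= ?oppr0 ?eqxx.
by rewrite !mul1r !mul0r !addr0 !mulr1 !mulr0 addr0.
Qed.

Lemma lindblad_rhs_entries (w ex ey dg : R -> R) g0 t (M : 'M[C]_2) :
  let L := lindblad_rhs w ex ey dg g0 t M in
  let W := 1 + w t in let X := ex t in let Y := ey t in let G := g0 + dg t in
  let a := RE (M 0 0) in let A := IM (M 0 0) in
  let u := RE (M 0 1) in let v := IM (M 0 1) in
  let p := RE (M 1 0) in let q := IM (M 1 0) in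
  let d := RE (M 1 1) in let D := IM (M 1 1) in
  RE (L 0 0) = (X * q - Y * p - X * v - Y * u) / 2 - G * a /\
  IM (L 0 0) = - (X * p + Y * q - X * u + Y * v) / 2 - G * A /\
  RE (L 0 1) = W * v + (X * (D - A) - Y * (d - a)) / 2 - G * u / 2 /\
  IM (L 0 1) = - W * u - (X * (d - a) + Y * (D - A)) / 2 - G * v / 2 /\
  RE (L 1 0) = (X * (A - D) + Y * (a - d)) / 2 - W * q - G * p / 2 /\
  IM (L 1 0) = - (X * (a - d) - Y * (A - D)) / 2 + W * p - G * q / 2 /\
  RE (L 1 1) = - (X * q - Y * p - X * v - Y * u) / 2 + G * a /\
  IM (L 1 1) = (X * p + Y * q - X * u + Y * v) / 2 + G * A.
Proof.
rewrite (mk2E M); move: (M 0 0) (M 0 1) (M 1 0) (M 1 1) => [a A] [u v] [p q] [d D].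
have inv2 : (2^-1 : C) = (2^-1)%:C by rewrite fmorphV rmorph_nat.
rewrite /lindblad_rhs /commutator /Ham /I_x /I_y /I_z /sigma_minus /sigma_plus.
rewrite /sigma_x /sigma_y /sigma_z !(scalemk2, addmk2, oppmk2, mulmk2) !mxE /= ?inv2 /=.
by repeat split; field.
Qed.
End two_by_two.

Section derive_on_positive_reals.
Variable R : realType.
Implicit Types (f df g dg : R -> R) (a b s : R).

Lemma near_right_itv (P : R -> Prop) s : (\forall c \near s^'+, P c) ->
  \forall r \near s^'+, forall c, s < c < r -> P c.
Proof.
rewrite {1}near_withinE => /nbhs_normP[d d0 Pd].
near=> r => c /andP[sc cr]; apply: Pd => //=.
have : r < s + d by near: r; apply: nbhs_right_lt; rewrite ltrDl.
rewrite ltr0_norm ?subr_lt0 //; lra.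
Unshelve. all: by end_near. Qed.

Definition is_derive_pos f df :=
  (forall s, 0 < s -> is_derive s 1 f (df s)) /\ f x @[x --> 0^'+] --> f 0.

Lemma is_derive_pos_cvg f df s : is_derive_pos f df -> 0 < s -> f x @[x --> s] --> f s.
Proof.
move=> [fdf _] s0; have [+ _] := fdf s s0.
by move=> /derivable1_diffP/differentiable_continuous.
Qed.

Lemma is_derive_pos_cvg_right f df s : is_derive_pos f df -> 0 <= s ->
  f x @[x --> s^'+] --> f s.
Proof.
move=> fdf; rewrite le_eqVlt => /orP[/eqP <-|s0]; first by case: fdf.
by apply: cvg_at_right_filter; apply: is_derive_pos_cvg fdf s0.
Qed.

Lemma is_derive_pos_MVT f df a b : is_derive_pos f df -> 0 <= a -> a < b ->
  exists2 c, a < c < b & f b - f a = df c * (b - a).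
Proof.
move=> fdf a0 ab.
have derab c : c \in `]a, b[%R -> is_derive c 1 f (df c).
  by rewrite in_itv /= => /andP[ac _]; apply: fdf.1; apply: le_lt_trans ac.
have contab : {within `[a, b], continuous f}.
  apply/continuous_within_itvP => //; split.
  - by move=> c; rewrite in_itv /= => /andP[ac _]; apply: is_derive_pos_cvg fdf _; lra.
  - exact: is_derive_pos_cvg_right fdf a0.
  - by apply: cvg_at_left_filter; apply: is_derive_pos_cvg fdf _; lra.
have [c] := MVT ab derab contab; rewrite in_itv /=.
by exists c.
Qed.

Lemma is_derive_pos_nincr f df a b : is_derive_pos f df -> 0 <= a -> a <= b ->
  (forall c, a < c < b -> df c <= 0) -> f b <= f a.
Proof.
move=> fdf a0; rewrite le_eqVlt => /orP[/eqP -> //|ab] df_le0.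
have [c /df_le0 dfc fbfa] := is_derive_pos_MVT fdf a0 ab.
rewrite -subr_le0 fbfa; apply: mulr_le0_ge0 => //; lra.
Qed.

Lemma is_derive_pos_nincr_near f df s : is_derive_pos f df -> 0 <= s ->
  (\forall c \near s^'+, df c <= 0) -> \forall r \near s^'+, f r <= f s.
Proof.
move=> fdf s0 /near_right_itv df_le0; near=> r.
apply: (is_derive_pos_nincr fdf s0); last exact: (near df_le0).
by apply/ltW; near: r; apply: nbhs_right_gt.
Unshelve. all: by end_near. Qed.

Lemma is_derive_pos_cst a : is_derive_pos (fun _ => a) (fun _ => 0).
Proof. by split; [move=> s _; exact: is_derive_cst | exact: cvg_cst]. Qed.

Lemma is_derive_pos_id : is_derive_pos id (fun _ => 1).
Proof. by split; [move=> s _; exact: is_derive_id | exact: cvg_at_right_filter cvg_id]. Qed.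

Lemma is_derive_posD f df g dg : is_derive_pos f df -> is_derive_pos g dg ->
  is_derive_pos (fun s => f s + g s) (fun s => df s + dg s).
Proof.
move=> [fdf fcv] [gdg gcv]; split; last exact: cvgD.
by move=> s s0; have := is_deriveD (fdf s s0) (gdg s s0).
Qed.

Lemma is_derive_posN f df : is_derive_pos f df ->
  is_derive_pos (fun s => - f s) (fun s => - df s).
Proof.
move=> [fdf fcv]; split; last exact: cvgN.
by move=> s s0; have := is_deriveN (fdf s s0).
Qed.

Lemma is_derive_posM f df g dg : is_derive_pos f df -> is_derive_pos g dg ->
  is_derive_pos (fun s => f s * g s) (fun s => f s * dg s + g s * df s).
Proof.
move=> [fdf fcv] [gdg gcv]; split; last exact: cvgM.
by move=> s s0; have := is_deriveM (fdf s s0) (gdg s s0).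
Qed.

Lemma eq_is_derive_pos f df dg : is_derive_pos f df ->
  (forall s, 0 < s -> df s = dg s) -> is_derive_pos f dg.
Proof. by move=> [fdf fcv] dfg; split=> // s s0; rewrite -dfg //; apply: fdf. Qed.

Lemma is_derive_posB_affine f df a b : is_derive_pos f df ->
  is_derive_pos (fun r => f r - (a + b * r)) (fun r => df r - b).
Proof.
move=> fdf; apply: eq_is_derive_pos => [|s _].
  apply/(is_derive_posD fdf)/is_derive_posN/is_derive_posD; first exact: is_derive_pos_cst.
  exact/is_derive_posM/is_derive_pos_id/is_derive_pos_cst.
by rewrite /= mulr1 mulr0 add0r addr0.
Qed.

Lemma is_derive_pos_const f df : is_derive_pos f df ->
  (forall s, 0 < s -> df s = 0) -> forall t, 0 <= t -> f t = f 0.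
Proof.
move=> fdf df0 t t0.
have df_le0 c : 0 < c < t -> df c <= 0 by case/andP=> c0 _; rewrite df0.
have dNf_le0 c : 0 < c < t -> - df c <= 0 by case/andP=> c0 _; rewrite df0 ?oppr0.
apply/eqP; rewrite eq_le (is_derive_pos_nincr fdf (lexx 0) t0 df_le0) /=.
by rewrite -lerN2 (is_derive_pos_nincr (is_derive_posN fdf) (lexx 0) t0 dNf_le0).
Qed.

Lemma real_induction (h : R -> R) t : 0 <= t -> h 0 <= 0 ->
  (forall s, 0 < s -> h x @[x --> s] --> h s) ->
  (forall s, 0 <= s -> s < t -> h s <= 0 -> \forall r \near s^'+, h r <= 0) ->
  h t <= 0.
Proof.
move=> t0 h0 hcont step.
pose S := [set s | 0 <= s <= t /\ forall r, 0 <= r <= s -> h r <= 0].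
have S0 : S 0.
  split=> [|r /andP[r0 r0']]; first by rewrite lexx t0.
  by have -> : r = 0 by lra.
have supS : has_sup S by split; [exists 0 | exists t => s [/andP[]]].
set s0 := sup S.
have s0_ub s : S s -> s <= s0 by apply: sup_upper_bound.
have s0_ge0 : 0 <= s0 by apply: s0_ub.
have s0_le : s0 <= t by apply: ge_sup; [exists 0 | move=> s [/andP[]]].
have below r : 0 <= r -> r < s0 -> h r <= 0.
  move=> r0 rs0; have /sup_adherent/(_ supS)[s [_ hs] rs] : 0 < s0 - r by lra.
  by apply: hs; rewrite r0 /=; rewrite -/s0 in rs; lra.
have at_s0 : h s0 <= 0.
  move: s0_ge0; rewrite le_eqVlt => /orP[/eqP <- //|s0_gt0].
  apply: (cvgr_to_le (cvg_at_left_filter (hcont s0 s0_gt0))).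
  by near=> r; apply: below; near: r; [exact: nbhs_left_ge | exact: nbhs_left_lt].
have [s0t|ts0] := ltP s0 t; last by have -> : t = s0 by apply/eqP; rewrite eq_le ts0.
have [r [[hr hs0r] /andP[s0r rt]]] : exists r,
    (h r <= 0 /\ forall c, s0 < c < r -> h c <= 0) /\ s0 < r <= t.
  apply: (@filter_ex _ s0^'+); near=> r; split; last first.
    by apply/andP; split; near: r; [exact: nbhs_right_gt | exact: nbhs_right_le].
  split; near: r; first exact: step.
  exact/near_right_itv/step.
suff /s0_ub : S r by lra.
split=> [|c /andP[c0 cr]]; first by rewrite rt; lra.
have [cs0|] := ltP c s0; first exact: below.
rewrite le_eqVlt => /orP[/eqP <- //|s0c].
by move: cr; rewrite le_eqVlt => /orP[/eqP -> //|cr]; apply: hs0r; rewrite s0c.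
Unshelve. all: by end_near. Qed.

Lemma is_derive_pos_le0 f df : is_derive_pos f df -> f 0 <= 0 ->
  (forall c, 0 < c -> 0 < f c -> df c <= 0) -> forall t, 0 <= t -> f t <= 0.
Proof.
move=> fdf f0 df_le0 t t0; rewrite leNgt; apply/negP => ft_gt0.
(* The slack [eta + eta * r] keeps the comparison strict wherever [f <= 0],
   so that right-continuity alone carries it past such points. *)
pose eta := f t / (2 * (1 + t)).
have eta_gt0 : 0 < eta by apply: divr_gt0; lra.
have hdh := is_derive_posB_affine eta eta fdf.
suff : f t - (eta + eta * t) <= 0.
  have -> : eta + eta * t = f t / 2 by rewrite /eta; field; lra.
  lra.
apply: (real_induction (h := fun r => f r - (eta + eta * r)) t0) => [|s s0|s s0 _ hs].
- by rewrite mulr0 addr0; lra.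
- exact: is_derive_pos_cvg hdh s0.
have [fs_gt0|fs_le0] := ltP 0 (f s).
  suff /(is_derive_pos_nincr_near hdh s0) : \forall c \near s^'+, df c - eta <= 0.
    by apply: filterS => r /=; lra.
  apply: filterS2 _ _ (nbhs_right_gt s) (cvgr_gt _ (is_derive_pos_cvg_right fdf s0) _ fs_gt0).
  by move=> c sc fc; have := df_le0 c (le_lt_trans s0 sc) fc; lra.
have hs_lt0 : f s - (eta + eta * s) < 0.
  have : 0 <= eta * s by apply: mulr_ge0; lra.
  lra.
by apply: filterS _ (cvgr_lt _ (is_derive_pos_cvg_right hdh s0) _ hs_lt0) => r /ltW.
Qed.

Lemma is_derive_pos_le_linear f df (k p : R) : is_derive_pos f df -> 0 < k -> f 0 <= 0 ->
  (forall c, 0 < c -> f c <= p -> df c <= k) ->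
  forall t, 0 <= t -> k * t <= p -> f t <= k * t.
Proof.
move=> fdf k_gt0 f0 df_le t t0 kt.
have hdh := is_derive_posB_affine 0 k fdf.
rewrite -subr_le0 -[k * t]add0r.
apply: (real_induction (h := fun r => f r - (0 + k * r)) t0) => [|s s0|s s0 st hs].
- by rewrite mulr0 !addr0 subr0.
- exact: is_derive_pos_cvg hdh s0.
have fs_lt : f s < p.
  have : k * s < k * t by rewrite ltr_pM2l.
  lra.
suff /(is_derive_pos_nincr_near hdh s0) : \forall c \near s^'+, df c - k <= 0.
  by apply: filterS => r /=; lra.
apply: filterS2 _ _ (nbhs_right_gt s) (cvgr_lt _ (is_derive_pos_cvg_right fdf s0) _ fs_lt).
by move=> c sc fc; rewrite subr_le0; apply: df_le; lra.
Qed.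

End derive_on_positive_reals.

Section drift_bound.
Variable R : rcfType.

Lemma dot2_le (X Y u v e m : R) : 0 <= e -> 0 <= m ->
  X ^+ 2 + Y ^+ 2 <= e ^+ 2 -> u ^+ 2 + v ^+ 2 <= m ^+ 2 -> X * v + Y * u <= e * m.
Proof.
move=> e0 m0 XY uv.
have cauchy_schwarz : (X * v + Y * u) ^+ 2 <= (X ^+ 2 + Y ^+ 2) * (u ^+ 2 + v ^+ 2).
  by have := sqr_ge0 (X * u - Y * v); nra.
have : (X ^+ 2 + Y ^+ 2) * (u ^+ 2 + v ^+ 2) <= (e * m) ^+ 2.
  by rewrite exprMn; apply: ler_pM => //; apply: addr_ge0; apply: sqr_ge0.
have : 0 <= e * m by apply: mulr_ge0.
nra.
Qed.

Lemma rate_threshold (p eps K : R) : 0 < p -> p < 1 -> 0 <= eps -> 0 <= K ->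
  p <= 2^-1 - K / (2 * Num.sqrt (4 * eps ^+ 2 + K ^+ 2)) ->
  K * p <= eps * Num.sqrt (p - p ^+ 2).
Proof.
move=> p0 p1 eps0 K0 hp.
set r := Num.sqrt _ in hp.
have r0 : 0 <= r := sqrtr_ge0 _.
have r2 : r ^+ 2 = 4 * eps ^+ 2 + K ^+ 2 by rewrite sqr_sqrtr //; nra.
have Kr_ge0 : 0 <= K / (2 * r) by apply: divr_ge0 => //; apply: mulr_ge0.
have Kr : K <= r * (1 - 2 * p).
  have [r_eq0|r_neq0] := eqVneq r 0.
    by rewrite r_eq0 mul0r; move: r2; rewrite r_eq0; nra.
  have r_gt0 : 0 < r by rewrite lt_neqAle eq_sym r_neq0 r0.
  have : K / (2 * r) <= 2^-1 - p by lra.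
  rewrite ler_pdivrMr; last by rewrite mulr_gt0.
  lra.
have K2 : K ^+ 2 * (p * (1 - p)) <= eps ^+ 2 * (1 - 2 * p) ^+ 2.
  have : K ^+ 2 <= r ^+ 2 * (1 - 2 * p) ^+ 2.
    by rewrite -exprMn ler_sqr ?nnegrE //; apply: le_trans Kr.
  rewrite r2; nra.
have K2p : K ^+ 2 * p <= eps ^+ 2 * (1 - p).
  have : eps ^+ 2 * (1 - 2 * p) ^+ 2 <= eps ^+ 2 * (1 - p) ^+ 2.
    by apply: ler_wpM2l; [apply: sqr_ge0 | rewrite ler_sqr ?nnegrE; lra].
  move=> /(le_trans K2); rewrite -(ler_pM2r (_ : 0 < 1 - p)); last lra.
  nra.
have sp2 : Num.sqrt (p - p ^+ 2) ^+ 2 = p - p ^+ 2 by rewrite sqr_sqrtr //; nra.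
rewrite -ler_sqr ?nnegrE ?mulr_ge0 ?sqrtr_ge0 //=; last lra.
nra.
Qed.

Lemma population_drift_le (p eps K X Y u v a gam : R) :
  0 < p -> p < 1 -> 0 <= eps -> 0 <= K ->
  p <= 2^-1 - K / (2 * Num.sqrt (4 * eps ^+ 2 + K ^+ 2)) ->
  X ^+ 2 + Y ^+ 2 <= eps ^+ 2 -> u ^+ 2 + v ^+ 2 <= a * (1 - a) -> 1 - a <= p ->
  0 <= gam <= K ->
  X * v + Y * u + gam * a <= 2 * eps * Num.sqrt (p - p ^+ 2) + K * (1 - p).
Proof.
move=> p0 p1 eps0 K0 hp XY uv ap /andP[gam0 gamK].
have p_half : p <= 2^-1.
  by have : 0 <= K / (2 * Num.sqrt (4 * eps ^+ 2 + K ^+ 2)); [apply: divr_ge0 | lra].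
have a_le1 : a <= 1 by have := sqr_ge0 u; have := sqr_ge0 v; nra.
have coh : a * (1 - a) <= p - p ^+ 2 by nra.
have drive : X * v + Y * u <= eps * Num.sqrt (p - p ^+ 2).
  apply: le_trans (ler_wpM2l eps0 (ler_wsqrtr coh)).
  by apply: dot2_le => //; rewrite ?sqrtr_ge0 // sqr_sqrtr //; apply: le_trans uv; nra.
have := rate_threshold p0 p1 eps0 K0 hp.
have : gam * a <= K by nra.
lra.
Qed.
End drift_bound.

Section qubit_solution.
Variables (R : realType) (w ex ey dg : R -> R) (g0 : R) (rho : R -> 'M[R[i]]_2).
Local Notation RE := (@complex.Re R).
Local Notation IM := (@complex.Im R).
Local Notation L s := (lindblad_rhs w ex ey dg g0 s (rho s)).

Hypothesis rate_ge0 : forall s, 0 <= s -> 0 <= g0 + dg s.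
Hypothesis rho_init : rho 0 = mk2 1 0 0 0.
Hypothesis rho_Re : forall k l,
  is_derive_pos (fun s => RE (rho s k l)) (fun s => RE (L s k l)).
Hypothesis rho_Im : forall k l,
  is_derive_pos (fun s => IM (rho s k l)) (fun s => IM (L s k l)).

Lemma trace_rho s : 0 <= s ->
  RE (rho s 1 1) = 1 - RE (rho s 0 0) /\ IM (rho s 1 1) = - IM (rho s 0 0).
Proof.
move=> s0; split.
- suff : RE (rho s 0 0) + RE (rho s 1 1) = RE (rho 0 0 0) + RE (rho 0 1 1).
    by rewrite rho_init !mxE /=; lra.
  apply: (is_derive_pos_const (is_derive_posD (rho_Re 0 0) (rho_Re 1 1)) _ s0) => c _.
  by have /= [-> [_ [_ [_ [_ [_ [-> _]]]]]]] := lindblad_rhs_entries w ex ey dg g0 c (rho c); ring.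
- suff : IM (rho s 0 0) + IM (rho s 1 1) = IM (rho 0 0 0) + IM (rho 0 1 1).
    by rewrite rho_init !mxE /=; lra.
  apply: (is_derive_pos_const (is_derive_posD (rho_Im 0 0) (rho_Im 1 1)) _ s0) => c _.
  by have /= [_ [-> [_ [_ [_ [_ [_ ->]]]]]]] := lindblad_rhs_entries w ex ey dg g0 c (rho c); ring.
Qed.

Lemma rho_hermitian s : 0 <= s ->
  [/\ IM (rho s 0 0) = 0, IM (rho s 1 1) = 0,
       RE (rho s 1 0) = RE (rho s 0 1) & IM (rho s 1 0) = - IM (rho s 0 1)].
Proof.
move=> s0.
pose P t := RE (rho t 0 1) - RE (rho t 1 0).
pose Q t := IM (rho t 0 1) + IM (rho t 1 0).
pose N t := IM (rho t 0 0) ^+ 2 + IM (rho t 1 1) ^+ 2 + 2^-1 * (P t ^+ 2 + Q t ^+ 2).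
have dN : is_derive_pos N
    (fun t => - (g0 + dg t) * (4 * IM (rho t 0 0) ^+ 2 + 2^-1 * (P t ^+ 2 + Q t ^+ 2))).
  have dP := is_derive_posD (rho_Re 0 1) (is_derive_posN (rho_Re 1 0)).
  have dQ := is_derive_posD (rho_Im 0 1) (rho_Im 1 0).
  apply: (eq_is_derive_pos (is_derive_posD
    (is_derive_posD (is_derive_posM (rho_Im 0 0) (rho_Im 0 0))
                    (is_derive_posM (rho_Im 1 1) (rho_Im 1 1)))
    (is_derive_posM (is_derive_pos_cst 2^-1)
                    (is_derive_posD (is_derive_posM dP dP) (is_derive_posM dQ dQ))))) => c c0.
  have /= [_ [-> [-> [-> [-> [-> [_ ->]]]]]]] := lindblad_rhs_entries w ex ey dg g0 c (rho c).
  by rewrite /P /Q (trace_rho (ltW c0)).2; field.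
have N_le0 : N s <= 0.
  have <- : N 0 = 0 by rewrite /N /P /Q rho_init !mxE /= !(expr0n, subrr, addr0, mulr0).
  apply: (is_derive_pos_nincr dN (lexx 0) s0) => c /andP[c0 _].
  rewrite mulNr oppr_le0; apply: mulr_ge0; first exact: rate_ge0 (ltW c0).
  by apply: addr_ge0; apply: mulr_ge0 => //; rewrite ?addr_ge0 ?sqr_ge0.
have sqr_le0 (x : R) : x ^+ 2 <= 0 -> x = 0.
  by move=> x2; apply/eqP; rewrite -sqrf_eq0 eq_le x2 sqr_ge0.
move: N_le0 (sqr_ge0 (IM (rho s 0 0))) (sqr_ge0 (IM (rho s 1 1))).
move: (sqr_ge0 (P s)) (sqr_ge0 (Q s)); rewrite /N /P /Q => P2 Q2 N_le0 A2 D2; split.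
- by apply: sqr_le0; lra.
- by apply: sqr_le0; lra.
- by apply/eqP; rewrite eq_sym -subr_eq0; apply/eqP/sqr_le0; lra.
- by apply/eqP; rewrite -addr_eq0 addrC; apply/eqP/sqr_le0; lra.
Qed.

Lemma coherence_le s : 0 <= s ->
  RE (rho s 0 1) ^+ 2 + IM (rho s 0 1) ^+ 2 <= RE (rho s 0 0) * (1 - RE (rho s 0 0)).
Proof.
move=> s0; rewrite -subr_le0.
pose negdet t :=
  RE (rho t 0 1) ^+ 2 + IM (rho t 0 1) ^+ 2 - RE (rho t 0 0) * (1 - RE (rho t 0 0)).
have dnegdet : is_derive_pos negdet
    (fun t => - (g0 + dg t) * (negdet t + RE (rho t 0 0) ^+ 2)).
  apply: (eq_is_derive_pos (is_derive_posD
    (is_derive_posD (is_derive_posM (rho_Re 0 1) (rho_Re 0 1))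
                    (is_derive_posM (rho_Im 0 1) (rho_Im 0 1)))
    (is_derive_posN (is_derive_posM (rho_Re 0 0)
       (is_derive_posD (is_derive_pos_cst 1) (is_derive_posN (rho_Re 0 0))))))) => c c0.
  have /= [-> [_ [-> [-> _]]]] := lindblad_rhs_entries w ex ey dg g0 c (rho c).
  have [-> -> -> ->] := rho_hermitian (ltW c0).
  by rewrite /negdet (trace_rho (ltW c0)).1; field.
apply: (is_derive_pos_le0 dnegdet _ _ s0) => [|c c0 negdet_gt0].
  by rewrite /negdet rho_init !mxE /=; lra.
rewrite mulNr oppr_le0; apply: mulr_ge0; first exact: rate_ge0 (ltW c0).
by have := sqr_ge0 (RE (rho c 0 0)); lra.
Qed.

Lemma excited_population_derive : is_derive_pos (fun s => 1 - RE (rho s 0 0))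
  (fun s => ex s * IM (rho s 0 1) + ey s * RE (rho s 0 1) + (g0 + dg s) * RE (rho s 0 0)).
Proof.
apply: (eq_is_derive_pos (is_derive_posD (is_derive_pos_cst 1) (is_derive_posN (rho_Re 0 0)))).
move=> c c0; have /= [-> _] := lindblad_rhs_entries w ex ey dg g0 c (rho c).
have [_ _ -> ->] := rho_hermitian (ltW c0).
by field.
Qed.

Lemma ground_population_ge (p eps K : R) :
  0 < p -> p < 1 -> 0 < eps -> 0 <= K ->
  p <= 2^-1 - K / (2 * Num.sqrt (4 * eps ^+ 2 + K ^+ 2)) ->
  (forall s, 0 <= s -> ex s ^+ 2 + ey s ^+ 2 <= eps ^+ 2) ->
  (forall s, 0 <= s -> g0 + dg s <= K) ->
  forall t, 0 <= t -> t <= 2 * p / (4 * eps * Num.sqrt (p - p ^+ 2) + 2 * K * (1 - p)) ->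
  1 - p <= RE (rho t 0 0).
Proof.
move=> p0 p1 eps0 K0 hp drive_le rate_le t t0.
set F := 2 * eps * Num.sqrt (p - p ^+ 2) + K * (1 - p).
have F_gt0 : 0 < F.
  have : 0 < eps * Num.sqrt (p - p ^+ 2) by rewrite mulr_gt0 // sqrtr_gt0; nra.
  have : 0 <= K * (1 - p) by apply: mulr_ge0; lra.
  rewrite /F; lra.
rewrite ler_pdivlMr; last by rewrite /F in F_gt0; lra.
move=> tF; have {tF} Ft : F * t <= p by rewrite /F; lra.
suff : 1 - RE (rho t 0 0) <= F * t by lra.
apply: (is_derive_pos_le_linear excited_population_derive F_gt0 _ _ t0 Ft) => [|c c0 qc].
  by rewrite rho_init !mxE /= subrr.
apply: population_drift_le => //; first exact: ltW.
- exact: drive_le (ltW c0).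
- exact: coherence_le (ltW c0).
- by apply/andP; split; [apply: rate_ge0 | apply: rate_le]; apply: ltW.
Qed.
End qubit_solution.

Theorem corollary1 (R : realType) (p0 eps om g0 g : R)
    (w ex ey dg : R -> R) (rho : R -> 'M[R[i]]_2) :
  0 < p0 -> p0 < 1 -> 0 < eps -> 0 <= om -> 0 <= g -> g <= g0 ->
  p0 <= 2^-1 - (g0 + g) / (2 * Num.sqrt (4 * eps ^+ 2 + (g0 + g) ^+ 2)) ->
  (forall t, 0 <= t -> `|w t| <= om) ->
  (forall t, 0 <= t -> Num.sqrt (ex t ^+ 2 + ey t ^+ 2) <= eps) ->
  (forall t, 0 <= t -> `|dg t| <= g) ->
  rho 0 = ket0 R *m bra0 R ->
  (forall k l : 'I_2,
      (fun s => @complex.Re R (rho s k l)) x @[x --> 0^'+] --> @complex.Re R (rho 0 k l)) ->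
  (forall k l : 'I_2,
      (fun s => @complex.Im R (rho s k l)) x @[x --> 0^'+] --> @complex.Im R (rho 0 k l)) ->
  (forall t : R, 0 < t -> forall k l : 'I_2,
      is_derive t 1 (fun s => @complex.Re R (rho s k l))
        (@complex.Re R (lindblad_rhs w ex ey dg g0 t (rho t) k l)) /\
      is_derive t 1 (fun s => @complex.Im R (rho s k l))
        (@complex.Im R (lindblad_rhs w ex ey dg g0 t (rho t) k l))) ->
  forall t : R, 0 <= t ->
    t <= 2 * p0 / (4 * eps * Num.sqrt (p0 - p0 ^+ 2) + 2 * (g0 + g) * (1 - p0)) ->
    (1 - p0)%:C <= (bra0 R *m rho t *m ket0 R) 0 0.
Proof.
(* The detuning w only rotates the coherence. *)
move=> p0_gt0 p0_lt1 eps_gt0 _ g_ge0 g_le_g0 hp _ drive_le dg_le rho0 Re0 Im0 master t t0 hT.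
have rate_ge0 s : 0 <= s -> 0 <= g0 + dg s by move/dg_le; rewrite ler_norml; lra.
have rate_le s : 0 <= s -> g0 + dg s <= g0 + g by move/dg_le; rewrite ler_norml; lra.
have drive_le2 s : 0 <= s -> ex s ^+ 2 + ey s ^+ 2 <= eps ^+ 2.
  move=> /drive_le sqrt_le; rewrite -ler_sqrt ?sqr_ge0 //.
  by rewrite sqrtr_sqr ger0_norm // ltW.
have rho_init : rho 0 = mk2 1 0 0 0 by rewrite rho0 ket0_bra0.
have rho_Re k l : is_derive_pos (fun s => complex.Re (rho s k l))
    (fun s => complex.Re (lindblad_rhs w ex ey dg g0 s (rho s) k l)).
  by split=> [s s0|]; [exact: (master s s0 k l).1 | exact: Re0].
have rho_Im k l : is_derive_pos (fun s => complex.Im (rho s k l))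
    (fun s => complex.Im (lindblad_rhs w ex ey dg g0 s (rho s) k l)).
  by split=> [s s0|]; [exact: (master s s0 k l).2 | exact: Im0].
have [Im00 _ _ _] := rho_hermitian rate_ge0 rho_init rho_Re rho_Im t0.
rewrite bra0_mx_ket0 lecE /= Im00 eqxx /=.
apply: (ground_population_ge rate_ge0 rho_init rho_Re rho_Im p0_gt0 p0_lt1 eps_gt0 _ hp)
  => //; lra.
Qed.
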